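(* Let $M$ be an algebraic number field of degree $m$ with ring of integers $\mathbb{Z}_M$ and integral basis $(1,\omega_2,\ldots,\omega_m)$. Let $\alpha$ be an algebraic integer over $M$ of degree $n$ over $M$, let $K=M(\alpha)$, and let $0\neq\mu\in\mathbb{Z}_M$. Define \[ c_{hji}=\tfrac12\left|\alpha^{(hj)}-\alpha^{(hi)}\right|\quad(1\le h\le m,\ 1\le i,j\le n,\ i\ne j), \qquad c_{hi}=\frac{|\mu^{(h)}|}{\prod_{1\le j\le n,\,j\ne i}c_{hji}}\quad(1\le h\le m,\ 1\le i\le n), \] \[ c_1=\max_{h,j,i}\frac{\sqrt[n]{|\mu^{(h)}|}}{c_{hji}}\ \ (\text{max over }1\le h\le m,\ 1\le i,j\le n,\ i\ne j),\qquad c_3=\frac{\sqrt[n]{\overline{|\mu|}}}{\overline{|\alpha|}},\qquad c_4=\max(c_1,c_3), \] \[ c_5=2c_2\,\overline{|\alpha|},\qquad d_{hi}=c_{hi}\,c_5^{\,n-1}\quad(1\le h\le m,\ 1\le i\le n), \] where $c_2$ is the row norm of $S^{-1}$ (the maximum over the rows of $S^{-1}$ of the sum of absolute values of the entries in that row), $S$ being the $m\times m$ matrix whose $j$-th row is $(1,\omega_2^{(j)},\ldots,\omega_m^{(j)})$. Suppose $X,Y\in\mathbb{Z}_M$ satisfy $N_{K/M}(X-\alpha Y)=\mu$ and $\overline{|Y|}>c_4$. Write $X=x_1+\omega_2x_2+\cdots+\omega_mx_m$, $Y=y_1+\omega_2y_2+\cdots+\omega_my_m$ with $x_i,y_i\in\mathbb{Z}$,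 put $A=\max(\max_i|x_i|,\max_i|y_i|)$ and $\beta=X-\alpha Y$. Then there exist indices $h,i$ with $1\le h\le m$, $1\le i\le n$ such that \[ |\beta^{(hi)}|\le d_{hi}\,A^{1-n}. \]
   Context: Let $\sigma_1,\ldots,\sigma_m$ be the embeddings of $M$ into $\mathbb{C}$; for $\gamma\in M$ write $\gamma^{(j)}=\sigma_j(\gamma)$. Let $f(x)$ be the monic relative defining polynomial of $\alpha$ over $M$, and for $j=1,\ldots,m$ let $\alpha^{(j1)},\ldots,\alpha^{(jn)}$ be the roots of the polynomial obtained by applying $\sigma_j$ to the coefficients of $f$. For $\gamma\in K$, $\gamma^{(jk)}$ denotes the image of $\gamma$ under the embedding of $K$ into $\mathbb{C}$ extending $\sigma_j$ and sending $\alpha$ to $\alpha^{(jk)}$; thus $\beta^{(hi)}=X^{(h)}-\alpha^{(hi)}Y^{(h)}$. For an algebraic number $\gamma$, its size $\overline{|\gamma|}$ is the maximum of the absolute values of its conjugates; in particular $\overline{|\alpha|}=\max_{j,k}|\alpha^{(jk)}|$, $\overline{|Y|}=\max_j|Y^{(j)}|$, $\overline{|\mu|}=\max_j|\mu^{(j)}|$. It is assumed that the $\alpha^{(hj)}$, $1\le j\le n$, are pairwise distinct for each $h$ (as they are, $f$ being irreducible over $M$), so that all $c_{hji}>0$. *)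

From HB Require Import structures.
From mathcomp Require Import all_boot all_order all_algebra all_field.
Set Implicit Arguments. Unset Strict Implicit. Unset Printing Implicit Defensive.
Import Order.TTheory GRing.Theory Num.Theory.
Local Open Scope ring_scope.

Definition algint (K : nzRingType) (x : K) : Prop :=
  integralOver (intr : int -> K) x.

Section Defs.
Variables (M : fieldExtType rat) (m n : nat).
Variable sigma : 'I_m -> {rmorphism M -> algC}.
Variable alpha : 'I_m -> 'I_n -> algC.
Variable w : 'I_m -> M.
Variable mu : M.

Definition c_hji (h : 'I_m) (j i : 'I_n) : algC := `|alpha h j - alpha h i| / 2.

Definition c_hi (h : 'I_m) (i : 'I_n) : algC :=
  `|sigma h mu| / \prod_(j < n | j != i) c_hji h j i.

Definition house (x : M) : algC := \big[Num.max/0]_(j < m) `|sigma j x|.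

Definition house_alpha : algC :=
  \big[Num.max/0]_(j < m) \big[Num.max/0]_(k < n) `|alpha j k|.

Definition c1 : algC :=
  \big[Num.max/0]_(h < m) \big[Num.max/0]_(j < n) \big[Num.max/0]_(i < n | i != j)
     (n.-root `|sigma h mu| / c_hji h j i).

Definition Smat : 'M[algC]_m := \matrix_(j < m, i < m) sigma j (w i).

Definition c2 : algC :=
  \big[Num.max/0]_(j < m) \sum_(i < m) `|invmx Smat j i|.

Definition c3 : algC := n.-root (house mu) / house_alpha.
Definition c4 : algC := Num.max c1 c3.
Definition c5 : algC := 2 * c2 * house_alpha.
Definition d_hi (h : 'I_m) (i : 'I_n) : algC := c_hi h i * c5 ^+ (n - 1).

Definition beta_conj (X Y : M) (h : 'I_m) (i : 'I_n) : algC :=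
  sigma h X - alpha h i * sigma h Y.

(* h-th conjugate of N_{K/M}(X - alpha Y): product of the images of
   X - alpha Y under the n embeddings of K extending sigma_h *)
Definition relnorm_conj (X Y : M) (h : 'I_m) : algC :=
  \prod_(i < n) beta_conj X Y h i.
End Defs.

Definition Acoef (m : nat) (x y : 'I_m -> int) : int :=
  Num.max (\big[Num.max/0]_(i < m) `|x i|) (\big[Num.max/0]_(i < m) `|y i|).

From HB Require Import structures.
From mathcomp Require Import all_boot all_order all_algebra all_field.
From mathcomp Require Import ring.
Import Order.TTheory GRing.Theory Num.Theory.
Local Open Scope ring_scope.

Set Implicit Arguments. Unset Strict Implicit. Unset Printing Implicit Defensive.

(* Take h with |Y^(h)| maximal and i with |beta^(hi)| minimal.  For j <> i,
   (alpha^(hj) - alpha^(hi)) Y^(h) = beta^(hi) - beta^(hj) forces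
   |beta^(hj)| >= c_hji |Y^(h)|, so the norm equation prod_j beta^(hj) = mu^(h)
   gives |beta^(hi)| <= c_hi |Y|^(1-n).  It remains to see A <= c5 |Y|.  As
   |Y| > c3, some |beta^(jk)| is at most |alpha| |Y|, hence every conjugate
   X^(j) = beta^(jk) + alpha^(jk) Y^(j) is at most 2 |alpha| |Y|, and S^-1
   turns bounds on conjugates into bounds on coordinates.  For n >= 2 this also
   needs |alpha| >= 1: the constant term of f is a nonzero algebraic integer of
   M, so its norm is a nonzero rational integer and one of its conjugates,
   a product of n conjugates of alpha, has absolute value at least 1. *)

Section NonnegBigmax.
Variables (R : numDomainType) (I : finType) (P : pred I) (F : I -> R).
Hypothesis F_ge0 : forall i, P i -> 0 <= F i.

Lemma bigmax_nneg_ge0 (r : seq I) : 0 <= \big[Num.max/0]_(i <- r | P i) F i.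
Proof. by elim/big_ind: _ => // a b a_ge0 b_ge0; rewrite maxEle; case: ifP. Qed.

Lemma le_bigmax_nneg i : P i -> F i <= \big[Num.max/0]_(j | P j) F j.
Proof.
move=> Pi; have : i \in index_enum I by rewrite mem_index_enum.
elim: (index_enum I) => // a r IHr; rewrite inE big_cons.
have [Pa | nPa] := boolP (P a); last first.
  by case/orP => [/eqP ia | /IHr //]; rewrite -ia Pi in nPa.
have cmp : F a >=< \big[Num.max/0]_(j <- r | P j) F j.
  by rewrite real_comparable ?ger0_real ?F_ge0 ?bigmax_nneg_ge0.
rewrite comparable_le_max //.
by case/orP => [/eqP -> | /IHr ->]; rewrite ?lexx ?orbT.
Qed.

End NonnegBigmax.

Lemma intr_bigmax_le (R : numDomainType) (I : finType) (P : pred I) (F : I -> int) (b : R) :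
  0 <= b -> (forall i, P i -> (F i)%:~R <= b) ->
  (\big[Num.max/0]_(i | P i) F i)%:~R <= b.
Proof. by move=> b_ge0 Fb; elim/big_ind: _ => // u v ub vb; rewrite maxElt; case: ifP. Qed.

Lemma exists_ge1_of_prod_ge1 (R : numDomainType) (I : finType) (i0 : I) (F : I -> R) :
  (forall i, 0 <= F i) -> 1 <= \prod_i F i -> exists i, 1 <= F i.
Proof.
move=> F_ge0 prod_ge1.
have [i _ Fmax] := @real_arg_maxP R I i0 predT F isT (fun i _ => ger0_real (F_ge0 i)).
exists i; rewrite real_leNgt ?ger0_real ?F_ge0 //; apply/negP => Fi_lt1.
have : \prod_j F j < \prod_(j : I) 1.
  apply: ltr_prod; first by apply/hasP; exists i0; rewrite ?mem_index_enum.
  by move=> j _; rewrite F_ge0 (le_lt_trans (Fmax j isT)).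
by rewrite big1_eq => /(le_lt_trans prod_ge1); rewrite ltxx.
Qed.

Lemma rootC_nneg (C : numClosedFieldType) n (x : C) : 0 <= x -> 0 <= n.-root x.
Proof. by have [-> | n_gt0] := posnP n; rewrite ?root0C // rootC_ge0. Qed.

Lemma exprVn_le_mul (R : numFieldType) (a b c : R) k :
  0 < a -> 0 < b -> a <= c * b -> b ^- k <= c ^+ k * a ^- k.
Proof.
move=> a_gt0 b_gt0 a_le; rewrite ler_pdivlMr ?exprn_gt0 // mulrC ler_pdivrMr ?exprn_gt0 //.
by rewrite -exprMn lerXn2r // nnegrE ltW // (lt_le_trans a_gt0).
Qed.

Lemma rmorph_ratZ (M : fieldExtType rat) (L : unitRingType) (s : {rmorphism M -> L}) q v :
  s (q *: v) = ratr q * s v.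
Proof. by rewrite -mulr_algl alg_num_field rmorphM /= fmorph_rat. Qed.

Lemma int_free_basis (V : vectType rat) m (w : 'I_m -> V) :
  \dim {:V} = m ->
  (forall c : 'I_m -> int, \sum_(i < m) w i *~ c i = 0 -> forall i, c i = 0) ->
  basis_of fullv [tuple w i | i < m].
Proof.
move=> dimV w_free; rewrite basisEfree subvf size_tuple dimV leqnn !andbT.
apply/freeP => k sum_k0 i.
pose D := \prod_(j < m) denq (k j).
pose c j := numq (k j) * \prod_(l < m | l != j) denq (k l).
have cE j : (c j)%:~R = k j * D%:~R :> rat by rewrite /D (bigD1 j) //= !intrM numqE mulrA.
have D_neq0 : D != 0 by apply/prodf_neq0 => j _; exact: denq_neq0.
have : \sum_(j < m) w j *~ c j = (D%:~R : rat) *: \sum_(j < m) k j *: [tuple w i | i < m]`_j.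
  rewrite scaler_sumr; apply: eq_bigr => j _.
  by rewrite nth_mktuple -scaler_int cE scalerA mulrC.
rewrite sum_k0 scaler0 => /w_free/(_ i)/eqP.
by rewrite -(intr_eq0 rat) cE mulf_eq0 intr_eq0 (negbTE D_neq0) orbF => /eqP.
Qed.

Lemma rmorph_independent (F L : fieldType) k (s : 'I_k -> {rmorphism F -> L}) :
  (forall j l, j != l -> exists x, s j x != s l x) ->
  forall c : 'I_k -> L, (forall x, \sum_(j < k) c j * s j x = 0) -> forall j, c j = 0.
Proof.
elim: k s => [|k IHk] s s_neq c sum_c0; first by case.
pose s' j := s (widen_ord (leqnSn k) j); pose c' j := c (widen_ord (leqnSn k) j).
have sum_c'E x : \sum_(j < k) c' j * s' j x = - (c ord_max * s ord_max x).
  by apply/eqP; rewrite -addr_eq0; have := sum_c0 x; rewrite big_ord_recr /= => ->.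
(* Subtracting s_max y times the relation from the relation at y * x gives a shorter one. *)
have sum_shift0 y x : \sum_(j < k) (c' j * (s' j y - s ord_max y)) * s' j x = 0.
  transitivity (\sum_(j < k) c' j * s' j (y * x) - s ord_max y * \sum_(j < k) c' j * s' j x).
    by rewrite mulr_sumr -sumrB; apply: eq_bigr => j _; rewrite rmorphM /=; ring.
  by rewrite !sum_c'E rmorphM /=; ring.
have s'_neq j l : j != l -> exists x, s' j x != s' l x.
  by move=> jl; apply: s_neq; apply: contra jl => /eqP/(congr1 val) /= /val_inj ->.
have c'0 j : c' j = 0.
  have [|y sy] := s_neq (widen_ord (leqnSn k) j) ord_max.
    by rewrite -val_eqE /= neq_ltn ltn_ord.
  have /eqP := IHk s' s'_neq _ (sum_shift0 y) j.
  by rewrite mulf_eq0 subr_eq0 (negbTE sy) orbF => /eqP.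
have cmax0 : c ord_max = 0.
  move: (sum_c'E 1); rewrite big1 => [|j _]; last by rewrite c'0 mul0r.
  by rewrite rmorph1 mulr1 => /eqP; rewrite eq_sym oppr_eq0 => /eqP.
move=> j; case: (unliftP ord_max j) => [j' ->|-> //].
by rewrite -(c'0 j'); congr c; apply: val_inj; exact: lift_max.
Qed.

Lemma algint_rmorph_pull (F : fieldType) (R : idomainType) (s : {rmorphism F -> R}) z :
  algint (s z) -> algint z.
Proof.
case=> p p_monic p_root; exists p => //.
by rewrite -(fmorph_root s) -map_poly_comp (eq_map_poly (rmorph_int s)).
Qed.

Lemma pchar0_irreducible_separable (F : fieldType) (p : {poly F}) :
  [pchar F] =i pred0 -> irreducible_poly p -> separable_poly p.
Proof.
move=> F_char0 [p_gt1 p_irr].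
have p_neq0 : p != 0 by rewrite -size_poly_gt0 ltnW.
have dp_neq0 : p^`() != 0.
  move: p_gt1; case sz_p : (size p) => [|[|k]] // _.
  apply/eqP => /(congr1 (fun q : {poly F} => q`_k)); rewrite coef_deriv coef0 => /eqP.
  rewrite -mulr_natr mulf_eq0 (pcharf0P F).1 // orbF.
  have -> : k.+1 = (size p).-1 by rewrite sz_p.
  by rewrite -lead_coefE lead_coef_eq0 (negbTE p_neq0).
rewrite unlock coprimep_def; apply/negPn/negP => gcd_neq1.
have gcd_eqp := p_irr _ gcd_neq1 (dvdp_gcdl p p^`()).
have : p %| p^`() by rewrite -(eqp_dvdl _ gcd_eqp) dvdp_gcdr.
by move/(dvdp_leq dp_neq0); rewrite leqNgt lt_size_deriv.
Qed.

Lemma separable_roots_inj (F : fieldType) (R : idomainType) (s : {rmorphism F -> R})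
    n (p : {poly F}) (a : 'I_n -> R) :
  separable_poly p -> map_poly s p = \prod_(k < n) ('X - (a k)%:P) -> injective a.
Proof.
move=> p_sep sp_E; move: p_sep; rewrite -(separable_map s) sp_E.
rewrite -(big_map a predT (fun x => 'X - x%:P)) separable_prod_XsubC => a_uniq.
apply/injectiveP; rewrite /injectiveb /dinjectiveb enumT.
by move: a_uniq; rewrite [index_enum _]unlock.
Qed.

Section Sizes.
Variables (M : fieldExtType rat) (m n : nat).
Variables (sigma : 'I_m -> {rmorphism M -> algC}) (alpha : 'I_m -> 'I_n -> algC).

Lemma house_ge0 (x : M) : 0 <= house sigma x.
Proof. exact: bigmax_nneg_ge0. Qed.

Lemma le_house (x : M) j : `|sigma j x| <= house sigma x.
Proof. exact: (@le_bigmax_nneg _ _ predT (fun j => `|sigma j x|)). Qed.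

Lemma house_attained (x : M) : (0 < m)%N -> exists h, house sigma x = `|sigma h x|.
Proof.
move=> m_gt0; have [h _ hmax] := @real_arg_maxP _ _ (Ordinal m_gt0) predT
  (fun j => `|sigma j x|) isT (fun j _ => normr_real _).
by exists h; apply/eqP; rewrite eq_le le_house bigmax_le // => j _; exact: hmax.
Qed.

Lemma house_alpha_ge0 : 0 <= house_alpha alpha.
Proof. by apply: bigmax_nneg_ge0 => j _; exact: bigmax_nneg_ge0. Qed.

Lemma le_house_alpha j k : `|alpha j k| <= house_alpha alpha.
Proof.
apply: le_trans (@le_bigmax_nneg _ _ predT (fun k => `|alpha j k|) _ k isT) _ => //.
apply: (@le_bigmax_nneg _ _ predT (fun j => \big[Num.max/0]_(k < n) `|alpha j k|)) => // l _.
exact: bigmax_nneg_ge0.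
Qed.

Lemma c3_ge0 (mu : M) : 0 <= c3 sigma alpha mu.
Proof. by rewrite divr_ge0 ?rootC_nneg ?house_ge0 ?house_alpha_ge0. Qed.

Lemma c3_le_c4 (mu : M) : c3 sigma alpha mu <= c4 sigma alpha mu.
Proof.
have c1_ge0 : 0 <= c1 sigma alpha mu.
  apply: bigmax_nneg_ge0 => h _; apply: bigmax_nneg_ge0 => j _.
  by apply: bigmax_nneg_ge0 => i _; rewrite !divr_ge0 ?rootC_nneg.
by rewrite comparable_le_max ?lexx ?orbT // real_comparable ?ger0_real ?c3_ge0.
Qed.

Lemma c2_ge0 (w : 'I_m -> M) : 0 <= c2 sigma w.
Proof. by apply: bigmax_nneg_ge0 => j _; exact: sumr_ge0. Qed.

Lemma c_hi_ge0 (mu : M) h i : 0 <= c_hi sigma alpha mu h i.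
Proof. by rewrite divr_ge0 // prodr_ge0 // => j _; rewrite divr_ge0. Qed.

End Sizes.

Lemma int_coord_bound (M : fieldExtType rat) m (sigma : 'I_m -> {rmorphism M -> algC})
    (w : 'I_m -> M) (Z : M) (z : 'I_m -> int) (b : algC) :
  Smat sigma w \in unitmx -> Z = \sum_(i < m) w i *~ z i -> 0 <= b ->
  (forall j, `|sigma j Z| <= b) -> forall k, `|(z k)%:~R : algC| <= c2 sigma w * b.
Proof.
move=> S_unit ZE b_ge0 Zb k; set S := Smat sigma w.
have SzE : \col_j sigma j Z = S *m \col_i (z i)%:~R.
  apply/matrixP => j l; rewrite !mxE ZE rmorph_sum; apply: eq_bigr => i _.
  by rewrite !mxE rmorphMz mulrzr.
have -> : (z k)%:~R = (invmx S *m \col_j sigma j Z) k 0 by rewrite SzE mulKmx // mxE.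
rewrite mxE; apply: le_trans (ler_norm_sum _ _ _) _.
apply: (@le_trans _ _ (\sum_j `|invmx S k j| * b)).
  by apply: ler_sum => j _; rewrite mxE normrM ler_wpM2l.
rewrite -mulr_suml ler_wpM2r //.
apply: (@le_bigmax_nneg _ _ predT (fun j => \sum_i `|invmx S j i|)) => // j _.
exact: sumr_ge0.
Qed.

Section Embeddings.
Variables (M : fieldExtType rat) (m : nat).
Variables (sigma : 'I_m -> {rmorphism M -> algC}) (w : 'I_m -> M).
Hypothesis dimM : \dim {:M} = m.
Hypothesis sigma_neq : forall j k : 'I_m, j != k -> exists x : M, sigma j x != sigma k x.
Hypothesis w_free :
  forall c : 'I_m -> int, \sum_(i < m) w i *~ c i = 0 -> forall i, c i = 0.

Lemma dim_gt0 : (0 < m)%N.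
Proof. by rewrite -dimM adim_gt0. Qed.

Lemma Smat_unit : Smat sigma w \in unitmx.
Proof.
rewrite unitmxE unitfE; apply/negP => /det0P [v v_neq0 /matrixP vS].
have vw i : \sum_(j < m) v 0 j * sigma j (w i) = 0.
  by have := vS 0 i; rewrite !mxE; under eq_bigr do rewrite mxE.
have vx x : \sum_(j < m) v 0 j * sigma j x = 0.
  rewrite (coord_basis (int_free_basis dimM w_free) (memvf x)).
  under eq_bigr do rewrite rmorph_sum /= mulr_sumr.
  rewrite exchange_big big1 // => i _.
  under eq_bigr do rewrite nth_mktuple rmorph_ratZ mulrCA.
  by rewrite -mulr_sumr vw mulr0.
move/eqP: v_neq0; apply; apply/matrixP => i j.
by rewrite ord1 mxE (rmorph_independent sigma_neq vx).
Qed.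

Hypothesis w_int : forall i, algint (w i).
Hypothesis w_span :
  forall x : M, algint x -> exists c : 'I_m -> int, x = \sum_(i < m) w i *~ c i.

(* The product of the conjugates of z is the determinant of the integer matrix
   of multiplication by z in the integral basis. *)
Lemma prod_conj_int (z : M) : algint z -> exists k : int, \prod_(j < m) sigma j z = k%:~R.
Proof.
move=> z_int.
have /fin_all_exists [B BE] :
    forall i, exists c : 'I_m -> int, z * w i = \sum_(k < m) w k *~ c k.
  by move=> i; apply: w_span; exact: integral_mul z_int (w_int i).
pose Bm : 'M[int]_m := \matrix_(i, k) B i k.
have SB : diag_mx (\row_j sigma j z) *m Smat sigma w = Smat sigma w *m (map_mx intr Bm)^T.
  apply/matrixP => j i; rewrite mul_diag_mx !mxE -rmorphM BE rmorph_sum.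
  by apply: eq_bigr => k _; rewrite !mxE rmorphMz mulrzr.
exists (\det Bm); move/(congr1 determinant): SB.
rewrite !det_mulmx det_diag det_tr det_map_mx [RHS]mulrC => /mulIf.
have detS_neq0 : \det (Smat sigma w) != 0 by rewrite -unitfE -unitmxE Smat_unit.
by move=> /(_ detS_neq0) <-; apply: eq_bigr => j _; rewrite mxE.
Qed.

Lemma exists_conj_ge1 (z : M) : algint z -> z != 0 -> exists h, 1 <= `|sigma h z|.
Proof.
move=> z_int z_neq0; have [k kE] := prod_conj_int z_int.
have k_neq0 : k != 0.
  by rewrite -(intr_eq0 algC) -kE; apply/prodf_neq0 => j _; rewrite fmorph_eq0.
apply: (exists_ge1_of_prod_ge1 (Ordinal dim_gt0) (F := fun h => `|sigma h z|)) => //.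
by rewrite -normr_prod kE -intr_norm ler1z -gtz0_ge1 normr_gt0.
Qed.

Lemma house_alpha_ge1 n (f : {poly M}) (alpha : 'I_m -> 'I_n -> algC) :
  irreducible_poly f -> size f = n.+1 -> (1 < n)%N ->
  (forall j, map_poly (sigma j) f = \prod_(k < n) ('X - (alpha j k)%:P)) ->
  (forall j k, algint (alpha j k)) -> 1 <= house_alpha alpha.
Proof.
move=> f_irr f_sz n_gt1 alphaE alpha_int.
have conj_f0 j : sigma j f`_0 = \prod_(k < n) - alpha j k.
  rewrite -coef_map alphaE -horner_coef0 horner_prod.
  by apply: eq_bigr => k _; rewrite hornerXsubC sub0r.
have f0_int : algint f`_0.
  apply: (@algint_rmorph_pull M _ (sigma (Ordinal dim_gt0))); rewrite conj_f0.
  elim/big_rec: _ => [|k x _ x_int]; first exact: integral1.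
  exact: integral_mul (integral_opp (alpha_int _ k)) x_int.
have f0_neq0 : f`_0 != 0.
  apply: contraTneq n_gt1 => f00.
  have : 'X - 0%:P %| f by rewrite dvdp_XsubCl /root horner_coef0 f00.
  move=> /f_irr.2; rewrite size_XsubC => /(_ isT)/eqp_size.
  by rewrite size_XsubC f_sz => -[<-].
have [h h_ge1] := exists_conj_ge1 f0_int f0_neq0.
have [k k_ge1] : exists k, 1 <= `|alpha h k|.
  apply: (exists_ge1_of_prod_ge1 (Ordinal (ltnW n_gt1)) (F := fun k => `|alpha h k|)) => //.
  by move: h_ge1; rewrite conj_f0 normr_prod; under eq_bigr do rewrite normrN.
exact: le_trans k_ge1 (le_house_alpha _ h k).
Qed.

End Embeddings.

Section Liouville.
Variables (M : fieldExtType rat) (m n : nat).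
Variables (sigma : 'I_m -> {rmorphism M -> algC}) (alpha : 'I_m -> 'I_n -> algC).
Variables (mu X Y : M).
Local Notation beta := (beta_conj sigma alpha X Y).
Local Notation ha := (house_alpha alpha).

Lemma c_hji_conj_le h i j :
  (forall k, `|beta h i| <= `|beta h k|) -> c_hji alpha h j i * `|sigma h Y| <= `|beta h j|.
Proof.
move=> i_min; rewrite /c_hji mulrAC ler_pdivrMr // -normrM.
have -> : (alpha h j - alpha h i) * sigma h Y = beta h i - beta h j.
  by rewrite /beta_conj; ring.
by apply: le_trans (ler_normB _ _) _; rewrite mulr_natr mulr2n lerD2r.
Qed.

Lemma beta_conj_min_le h i :
  injective (alpha h) -> relnorm_conj sigma alpha X Y h = sigma h mu ->
  (forall k, `|beta h i| <= `|beta h k|) ->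
  `|beta h i| * `|sigma h Y| ^+ (n - 1) <= c_hi sigma alpha mu h i.
Proof.
move=> alpha_inj normE i_min.
set P := \prod_(j < n | j != i) c_hji alpha h j i.
have P_gt0 : 0 < P.
  apply: prodr_gt0 => j ji; rewrite divr_gt0 // normr_gt0 subr_eq0.
  by apply: contra ji => /eqP /alpha_inj ->.
rewrite /c_hi -/P ler_pdivlMr // -mulrA.
have -> : `|sigma h mu| = `|beta h i| * \prod_(j < n | j != i) `|beta h j|.
  by rewrite -normE normr_prod (bigD1 i).
apply: ler_wpM2l => //.
have -> : `|sigma h Y| ^+ (n - 1) = \prod_(j < n | j != i) `|sigma h Y|.
  by rewrite (eq_bigl (mem (predC1 i))) // prodr_const cardC1 card_ord subn1.
rewrite -big_split /=; apply: ler_prod => j _.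
by rewrite mulr_ge0 ?divr_ge0 //= mulrC c_hji_conj_le.
Qed.

Hypothesis n_gt0 : (0 < n)%N.
Hypothesis ha_gt0 : 0 < ha.
Hypothesis c3_lt_house : c3 sigma alpha mu < house sigma Y.

Lemma exists_beta_conj_le j :
  relnorm_conj sigma alpha X Y j = sigma j mu -> exists k, `|beta j k| <= ha * house sigma Y.
Proof.
move=> normE; have [k _ k_min] := @real_arg_minP _ _ (Ordinal n_gt0) predT
  (fun k => `|beta j k|) isT (fun k _ => normr_real _).
have ha_Y_ge0 : 0 <= ha * house sigma Y by rewrite mulr_ge0 ?house_ge0 ?ltW.
exists k; rewrite -(ler_pXn2r n_gt0) ?nnegrE //.
apply: (@le_trans _ _ (house sigma mu)).
  have -> : `|beta j k| ^+ n = \prod_(k' < n) `|beta j k| by rewrite prodr_const card_ord.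
  apply: le_trans (le_house _ mu j); rewrite -normE normr_prod.
  by apply: ler_prod => k' _; rewrite normr_ge0 k_min.
rewrite -{1}(rootCK n_gt0 (house sigma mu)) lerXn2r ?nnegrE ?rootC_ge0 ?house_ge0 //.
by rewrite mulrC -ler_pdivrMr // ltW.
Qed.

Lemma conj_X_le j :
  relnorm_conj sigma alpha X Y j = sigma j mu -> `|sigma j X| <= 2 * ha * house sigma Y.
Proof.
move=> /exists_beta_conj_le [k beta_le].
have -> : sigma j X = beta j k + alpha j k * sigma j Y by rewrite /beta_conj; ring.
apply: le_trans (ler_normD _ _) _; rewrite -mulrA mulr_natl mulr2n lerD // normrM.
by apply: ler_pM; rewrite ?le_house ?le_house_alpha.
Qed.

End Liouville.

Lemma Acoef_ge1 (V : zmodType) m (w : 'I_m -> V) (Y : V) (x y : 'I_m -> int) :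
  Y = \sum_(i < m) w i *~ y i -> Y != 0 -> 1 <= Acoef x y.
Proof.
move=> YE Y_neq0.
have /existsP [k yk_neq0] : [exists k, y k != 0].
  apply: contraNT Y_neq0 => /existsPn y0; apply/eqP.
  by rewrite YE big1 // => k _; have /negPn/eqP -> := y0 k; rewrite mulr0z.
rewrite /Acoef le_max; apply/orP; right.
by apply: (bigmax_sup k) => //; rewrite -gtz0_ge1 normr_gt0.
Qed.

Lemma Acoef_le (M : fieldExtType rat) m n (sigma : 'I_m -> {rmorphism M -> algC})
    (alpha : 'I_m -> 'I_n -> algC) (w : 'I_m -> M) (X Y : M) (x y : 'I_m -> int) :
  Smat sigma w \in unitmx ->
  X = \sum_(i < m) w i *~ x i -> Y = \sum_(i < m) w i *~ y i -> 1 <= house_alpha alpha ->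
  (forall j, `|sigma j X| <= 2 * house_alpha alpha * house sigma Y) ->
  ((Acoef x y)%:~R : algC) <= c5 sigma alpha w * house sigma Y.
Proof.
move=> S_unit XE YE ha_ge1 X_le.
set b := 2 * house_alpha alpha * house sigma Y.
have Yh_ge0 := house_ge0 sigma Y.
have b_ge0 : 0 <= b by rewrite !mulr_ge0 ?house_alpha_ge0.
have Y_le j : `|sigma j Y| <= b.
  apply: le_trans (le_house _ _ j) (ler_peMl Yh_ge0 _).
  by rewrite (le_trans ha_ge1) // mulr_natl mulr2n lerDr house_alpha_ge0.
have -> : c5 sigma alpha w * house sigma Y = c2 sigma w * b by rewrite /c5 /b; ring.
have cb_ge0 : 0 <= c2 sigma w * b by rewrite mulr_ge0 ?c2_ge0.
rewrite /Acoef maxElt; case: ifP => _; apply: intr_bigmax_le => // k _; rewrite intr_norm.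
  exact: int_coord_bound S_unit YE b_ge0 Y_le k.
exact: int_coord_bound S_unit XE b_ge0 X_le k.
Qed.

Unset Implicit Arguments. Set Strict Implicit.

Theorem theorem2
  (M : fieldExtType rat) (m : nat)
  (* M has degree m over Q *)
  (hdeg : \dim (fullv : {vspace M}) = m)
  (* the embeddings of M into C: m pairwise distinct ring morphisms *)
  (sigma : 'I_m -> {rmorphism M -> algC})
  (hsigma : forall j k : 'I_m, j != k -> exists x : M, sigma j x != sigma k x)
  (* integral basis (1, omega_2, ..., omega_m) of Z_M *)
  (w : 'I_m -> M)
  (hw1 : forall i : 'I_m, val i = 0%N -> w i = 1)
  (hwint : forall i, algint (w i))
  (hwfree : forall c : 'I_m -> int, \sum_(i < m) w i *~ c i = 0 -> forall i, c i = 0)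
  (hwspan : forall x : M, algint x -> exists c : 'I_m -> int, x = \sum_(i < m) w i *~ c i)
  (* alpha: algebraic integer of degree n over M, with monic relative
     defining polynomial f; alpha^(jk) the roots of sigma_j(f) *)
  (n : nat) (f : {poly M})
  (hfmon : f \is monic) (hfirr : irreducible_poly f) (hfsz : size f = n.+1)
  (alpha : 'I_m -> 'I_n -> algC)
  (halpha : forall j, map_poly (sigma j) f = \prod_(k < n) ('X - (alpha j k)%:P))
  (halpha_int : forall j k, algint (alpha j k))
  (* 0 <> mu in Z_M *)
  (mu : M) (hmu0 : mu != 0) (hmuint : algint mu)
  (* X, Y in Z_M with N_{K/M}(X - alpha Y) = mu and |Y| > c4 *)
  (X Y : M) (hX : algint X) (hY : algint Y)
  (hnorm : forall h : 'I_m, relnorm_conj sigma alpha X Y h = sigma h mu)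
  (hYbig : house sigma Y > c4 sigma alpha mu)
  (* coordinates of X, Y in the integral basis *)
  (x y : 'I_m -> int)
  (hx : X = \sum_(i < m) w i *~ x i) (hy : Y = \sum_(i < m) w i *~ y i) :
  exists (h : 'I_m) (i : 'I_n),
    `|beta_conj sigma alpha X Y h i|
      <= d_hi sigma alpha w mu h i * ((Acoef x y)%:~R : algC) ^- (n - 1).
Proof.
have m_gt0 : (0 < m)%N by rewrite -hdeg adim_gt0.
have n_gt0 : (0 < n)%N by rewrite -ltnS -hfsz; case: hfirr.
have c3_lt := le_lt_trans (c3_le_c4 sigma alpha mu) hYbig.
have Yh_gt0 := le_lt_trans (c3_ge0 sigma alpha mu) c3_lt.
have [h Yh_E] := house_attained sigma Y m_gt0.
have [i _ i_min] := @real_arg_minP _ _ (Ordinal n_gt0) predT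
  (fun i => `|beta_conj sigma alpha X Y h i|) isT (fun i _ => normr_real _).
have alpha_inj : injective (alpha h).
  apply: separable_roots_inj (halpha h); apply: pchar0_irreducible_separable hfirr.
  by move=> p; rewrite -(fmorph_pchar (sigma h)) pchar_num.
have := beta_conj_min_le alpha_inj (hnorm h) (fun k => i_min k isT).
rewrite -Yh_E -ler_pdivlMr ?exprn_gt0 // => beta_le.
exists h, i; apply: le_trans beta_le _; rewrite /d_hi -mulrA ler_wpM2l ?c_hi_ge0 //.
have [n_le1 | n_gt1] := leqP n 1.
  by move: n_le1; rewrite -subn_eq0 => /eqP ->; rewrite !expr0 invr1 mulr1.
have ha_ge1 := house_alpha_ge1 hdeg hsigma hwfree hwint hwspan hfirr hfsz n_gt1 halpha halpha_int.
have ha_gt0 := lt_le_trans ltr01 ha_ge1.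
have Y_neq0 : Y != 0.
  by apply: contraTneq Yh_gt0; rewrite Yh_E => ->; rewrite rmorph0 normr0 ltxx.
apply: exprVn_le_mul => //.
  by rewrite ltr0z (lt_le_trans ltr01 (Acoef_ge1 x hy Y_neq0)).
apply: Acoef_le hx hy ha_ge1 _; first exact: Smat_unit hdeg hsigma hwfree.
by move=> j; exact: conj_X_le n_gt0 ha_gt0 c3_lt j (hnorm j).
Qed.
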